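(* Let $X$ be a Banach space, $B$ an admissible Banach sequence space over $\mathbb{Z}$, $(A_m)_{m\in\mathbb{Z}}$ a sequence of invertible bounded linear operators on $X$ with $\sup_m\lVert A_m\rVert<\infty$ admitting an exponential dichotomy, and $c>0$ a constant as described in the context. Let $f_n\colon X\to X$, $n\in\mathbb{Z}$, be differentiable maps with $\lVert d_xf_n\rVert\le c$ for all $x,n$, $\sup_n\sup_x\lVert f_n(x)\rVert<\infty$, and $\lVert d_xf_n-d_yf_n\rVert\le D\lVert x-y\rVert^r$ for some $D,r>0$ and all $x,y,n$. Put $F_n=A_n+f_n$. For $\delta>0$ and a $(\delta,B)$-pseudotrajectory $\mathbf y=(y_n)_{n\in\mathbb{Z}}$ for $x_{n+1}=F_n(x_n)$, let $\Gamma\colon X_B\to X_B$ be given by $(\Gamma\boldsymbol\xi)_n=A_{n-1}\xi_{n-1}+d_{y_{n-1}}f_{n-1}\,\xi_{n-1}$. Then $\mathrm{Id}-\Gamma$ is invertible on $X_B$, and there exists a constant $K>0$, independent of the pseudotrajectory $\mathbf y$ (and of $\delta$), such that $\lVert(\mathrm{Id}-\Gamma)^{-1}\rVert\le K$.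
   Context: A normed sequence space over $\mathbb{Z}$ is a linear subspace $B$ of the space of real sequences $\mathbf s=(s_n)_{n\in\mathbb{Z}}$ with a norm $\lVert\cdot\rVert_B$ such that if $\mathbf s'\in B$ and $|s_n|\le|s'_n|$ for all $n$ then $\mathbf s\in B$ and $\lVert\mathbf s\rVert_B\le\lVert\mathbf s'\rVert_B$; a Banach sequence space if complete. Admissible: each $\chi_{\{n\}}\in B$ with $\lVert\chi_{\{n\}}\rVert_B>0$, and $B$ is invariant under shifts $(s_n)\mapsto(s_{n+m})$ with equal norms; assume $\lVert\chi_{\{0\}}\rVert_B=1$. $X_B$ is the set of sequences $(x_n)\subset X$ with $(\lVert x_n\rVert)\in B$, normed by $\lVert\mathbf x\rVert_B=\lVert(\lVert x_n\rVert)_n\rVert_B$. Exponential dichotomy: with $\mathcal A(m,n)=A_{m-1}\cdots A_n$ ($m>n$), $\mathrm{Id}$ ($m=n$), $A_m^{-1}\cdots A_{n-1}^{-1}$ ($m<n$), there exist projections $P_m$ with $P_{m+1}A_m=A_mP_m$ and $C,\lambda>0$ with $\lVert\mathcal A(m,n)P_n\rVert\le Ce^{-\lambda(m-n)}$ ($m\ge n$) and $\lVert\mathcal A(m,n)(\mathrm{Id}-P_n)\rVert\le Ce^{-\lambda(n-m)}$ ($m\le n$). The constant $c>0$ is such that there is $K>0$ for which every sequence $(B_m)$ of bounded operators with $\sup_m\lVert A_m-B_m\rVert\le c$ admits an exponential dichotomy and the operator $(\mathbb B\mathbf x)_n=B_{n-1}x_{n-1}$ on $X_B$ has $\mathrm{Id}-\mathbb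 B$ invertible with $\lVert(\mathrm{Id}-\mathbb B)^{-1}\rVert\le K$. A $(\delta,B)$-pseudotrajectory for $x_{n+1}=F_n(x_n)$ is a sequence $(y_n)\subset X$ with $(y_{n+1}-F_n(y_n))_n\in X_B$ and $\lVert(y_{n+1}-F_n(y_n))_n\rVert_B\le\delta$. *)

From HB Require Import structures.
From mathcomp Require Import all_boot all_order all_algebra.
From mathcomp Require Import all_classical all_reals all_analysis.
Set Implicit Arguments. Unset Strict Implicit. Unset Printing Implicit Defensive.
Import Order.TTheory GRing.Theory Num.Theory.
Import numFieldNormedType.Exports.
Local Open Scope classical_set_scope.
Local Open Scope ring_scope.

Section Defs.
Context {R : realType}.

Definition chi (n : int) : int -> R := fun k => if k == n then 1 else 0.

Definition admissible_Banach_seq_space (B : set (int -> R))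
    (nB : (int -> R) -> R) : Prop :=
  B (fun _ => 0) /\
  (forall s t, B s -> B t -> B (fun n => s n + t n)) /\
  (forall (a : R) s, B s -> B (fun n => a * s n)) /\
  (forall s, B s -> nB s = 0 -> s = (fun _ => 0)) /\
  (forall (a : R) s, B s -> nB (fun n => a * s n) = `|a| * nB s) /\
  (forall s t, B s -> B t -> nB (fun n => s n + t n) <= nB s + nB t) /\
  (forall s s', B s' -> (forall n, `|s n| <= `|s' n|) -> B s /\ nB s <= nB s') /\
  (forall u : nat -> int -> R, (forall k, B (u k)) ->
     (forall e : R, 0 < e -> exists N, forall k l, (N <= k)%N -> (N <= l)%N ->
         nB (fun n => u k n - u l n) <= e) ->
     exists s, B s /\ forall e : R, 0 < e -> exists N, forall k, (N <= k)%N ->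
         nB (fun n => u k n - s n) <= e) /\
  (* admissibility *)
  (forall n, B (chi n) /\ 0 < nB (chi n)) /\
  (forall s (m : int), B s -> B (fun n => s (n + m)) /\ nB (fun n => s (n + m)) = nB s) /\
  nB (chi 0) = 1.

Context {X : normedModType R}.

Definition XB (B : set (int -> R)) (x : int -> X) : Prop := B (fun n => `|x n|).
Definition nXB (nB : (int -> R) -> R) (x : int -> X) : R := nB (fun n => `|x n|).

Definition op_norm_le (T : X -> X) (M : R) : Prop := forall x, `|T x| <= M * `|x|.
Definition bdd_linear_op (T : X -> X) : Prop :=
  (forall (a : R) u v, T (a *: u + v) = a *: T u + T v) /\ exists M, op_norm_le T M.

(** transition operator A(m,n), given inverses Ainv of the A_m *)
Fixpoint fwd (A : int -> X -> X) (n : int) (k : nat) : X -> X :=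
  match k with O => id | S k' => fun x => A (n + k'%:Z) (fwd A n k' x) end.
Fixpoint bwd (Ainv : int -> X -> X) (n : int) (k : nat) : X -> X :=
  match k with O => id | S k' => fun x => Ainv (n - k'%:Z - 1) (bwd Ainv n k' x) end.
Definition transA (A Ainv : int -> X -> X) (m n : int) : X -> X :=
  if (n <= m)%R then fwd A n `|m - n|%N else bwd Ainv n `|n - m|%N.

Definition exp_dichotomy (A : int -> X -> X) : Prop :=
  exists Ainv : int -> X -> X,
    (forall m, cancel (A m) (Ainv m) /\ cancel (Ainv m) (A m)) /\
    exists (P : int -> X -> X) (C lam : R),
      0 < C /\ 0 < lam /\
      (forall m, bdd_linear_op (P m) /\ forall x, P m (P m x) = P m x) /\
      (forall m x, P (m + 1) (A m x) = A m (P m x)) /\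
      (forall m n x, (n <= m)%R ->
         `|transA A Ainv m n (P n x)| <= C * expR (- lam * (m - n)%:~R) * `|x|) /\
      (forall m n x, (m <= n)%R ->
         `|transA A Ainv m n (x - P n x)| <= C * expR (- lam * (n - m)%:~R) * `|x|).

Definition invertible_on_XB (B : set (int -> R)) (nB : (int -> R) -> R)
    (T : (int -> X) -> (int -> X)) (K : R) : Prop :=
  (forall xi, XB B xi -> XB B (T xi)) /\
  (exists M : R, forall xi, XB B xi -> nXB nB (T xi) <= M * nXB nB xi) /\
  exists G : (int -> X) -> (int -> X),
    (forall z, XB B z -> XB B (G z)) /\
    (forall xi, XB B xi -> G (T xi) = xi) /\
    (forall z, XB B z -> T (G z) = z) /\
    (forall z, XB B z -> nXB nB (G z) <= K * nXB nB z).

Definition Id_minus_shift (Bm : int -> X -> X) : (int -> X) -> (int -> X) :=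
  fun x n => x n - Bm (n - 1) (x (n - 1)).

Definition admissible_c (B : set (int -> R)) (nB : (int -> R) -> R)
    (A : int -> X -> X) (c : R) : Prop :=
  0 < c /\ exists K : R, 0 < K /\
    forall Bm : int -> X -> X, (forall m, bdd_linear_op (Bm m)) ->
      (forall m, op_norm_le (fun x => A m x - Bm m x) c) ->
      exp_dichotomy Bm /\ invertible_on_XB B nB (Id_minus_shift Bm) K.

Definition pseudotrajectory (B : set (int -> R)) (nB : (int -> R) -> R)
    (F : int -> X -> X) (delta : R) (y : int -> X) : Prop :=
  XB B (fun n => y (n + 1) - F n (y n)) /\
  nXB nB (fun n => y (n + 1) - F n (y n)) <= delta.

End Defs.

(* Linearizing along y turns Id - Gamma into Id - 𝔹 for the operators
   B_m = A_m + d_{y_m} f_m.  Since ‖d_x f_m‖ <= c, these are c-perturbations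
   of A_m, so the defining property of c yields invertibility with the single
   constant K attached to c, which sees neither y nor delta. *)
From HB Require Import structures.
From mathcomp Require Import all_boot all_order all_algebra.
From mathcomp Require Import all_classical all_reals all_analysis.
Import Order.TTheory GRing.Theory Num.Theory.
Import numFieldNormedType.Exports.
Local Open Scope ring_scope.

Section Perturbation.
Context {R : realType} {X : normedModType R}.

Lemma bdd_linear_opD (T : X -> X) (S : {linear X -> X}) (c : R) :
  bdd_linear_op T -> op_norm_le S c -> bdd_linear_op (fun x => T x + S x).
Proof.
move=> [linT [M boundT]] boundS; split.
- move=> a u v; rewrite linT linearP scalerDr -!addrA; congr (_ + _).
  by rewrite addrCA.
- exists (M + c) => x; rewrite mulrDl.
  by apply: le_trans (ler_normD _ _) _; apply: lerD.
Qed.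

Lemma op_norm_le_subDr (T S : X -> X) (c : R) :
  op_norm_le S c -> op_norm_le (fun x => T x - (T x + S x)) c.
Proof. by move=> boundS x; rewrite opprD addrA subrr sub0r normrN. Qed.

Lemma admissible_c_perturbation {B : set (int -> R)} {nB : (int -> R) -> R}
    {A : int -> X -> X} {c : R} :
  (forall m, bdd_linear_op (A m)) -> admissible_c B nB A c ->
  exists K : R, 0 < K /\
    forall S : int -> {linear X -> X}, (forall m, op_norm_le (S m) c) ->
      invertible_on_XB B nB (Id_minus_shift (fun m x => A m x + S m x)) K.
Proof.
move=> bddA [_ [K [K_gt0 HK]]]; exists K; split => // S boundS.
have bddAS m : bdd_linear_op (fun x => A m x + S m x).
  exact: bdd_linear_opD (bddA m) (boundS m).
have closeAS m : op_norm_le (fun x => A m x - (A m x + S m x)) c.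
  exact: op_norm_le_subDr.
by have [_] := HK _ bddAS closeAS.
Qed.

End Perturbation.

Theorem lemma3p3 (R : realType) (X : completeNormedModType R)
  (B : set (int -> R)) (nB : (int -> R) -> R)
  (A : int -> X -> X) (c : R) (f : int -> X -> X) (D r : R) :
  admissible_Banach_seq_space B nB ->
  (forall m, bdd_linear_op (A m) /\ bijective (A m)) ->
  (exists M : R, forall m, op_norm_le (A m) M) ->
  exp_dichotomy A ->
  admissible_c B nB A c ->
  (forall n x, differentiable (f n) x) ->
  (forall n x, op_norm_le ('d (f n) x) c) ->
  (exists M : R, forall n x, `|f n x| <= M) ->
  0 < D -> 0 < r ->
  (forall n x y, op_norm_le (fun v => 'd (f n) x v - 'd (f n) y v)
                            (D * powR `|x - y| r)) ->
  exists K : R, 0 < K /\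
    forall (delta : R) (y : int -> X), 0 < delta ->
      pseudotrajectory B nB (fun n x => A n x + f n x) delta y ->
      invertible_on_XB B nB
        (fun xi n => xi n - (A (n - 1) (xi (n - 1))
                             + 'd (f (n - 1)) (y (n - 1)) (xi (n - 1))))
        K.
Proof.
move=> _ opA _ _ admc _ bound_df _ _ _ _.
have [K [K_gt0 HK]] := admissible_c_perturbation (fun m => proj1 (opA m)) admc.
exists K; split => // delta y _ _.
exact: HK (fun m => 'd (f m) (y m)) (fun m => bound_df m (y m)).
Qed.
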